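(* Let $\mathcal{H}$ be a real Hilbert space, let $A_i:\mathcal{H}\rightrightarrows\mathcal{H}$ be operators for $i=1,\ldots,r$, and let $\beta\in{]0,1[}$. Then \[ \operatorname{zer}\left(\sum_{i=1}^rA_i^{(\beta)}\right)=\beta J_{\frac{1}{r(1-\beta)}\sum_{i=1}^rA_i}(0). \] Therefore, $\operatorname{zer}\left(\sum_{i=1}^rA_i^{(\beta)}\right)\neq\emptyset$ if and only if $0\in\operatorname{ran}\left(\operatorname{Id}+\frac{1}{r(1-\beta)}\sum_{i=1}^rA_i\right)$.
   Context: The resolvent of an operator $T$ is $J_T:=(\operatorname{Id}+T)^{-1}$, i.e. $J_T(x)=\{y:x\in y+T(y)\}$ (a set). The $\beta$-strengthening of $A$ is $A^{(\beta)}(x):=\left(A+(1-\beta)\operatorname{Id}\right)\left(\frac{x}{\beta}\right)$. $\operatorname{zer}T=\{x:0\in T(x)\}$; $\operatorname{ran}$ denotes the range. *)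

From HB Require Import structures.
From mathcomp Require Import all_boot all_order all_algebra.
From mathcomp Require Import all_classical all_reals all_analysis.
Set Implicit Arguments. Unset Strict Implicit. Unset Printing Implicit Defensive.
Import Order.TTheory GRing.Theory Num.Theory.
Import numFieldNormedType.Exports.
Local Open Scope classical_set_scope.
Local Open Scope ring_scope.

Record inner_product (R : realType) (H : completeNormedModType R) := InnerProduct {
  inner : H -> H -> R ;
  inner_sym : forall x y, inner x y = inner y x ;
  inner_linear : forall a x y z, inner (a *: x + y) z = a * inner x z + inner y z ;
  inner_norm : forall x, inner x x = `|x| ^+ 2
}.

Definition opr (R : realType) (H : lmodType R) := H -> set H.

Section Ops.
Variables (R : realType) (H : lmodType R).

Definition op_id : opr H := fun x => [set x].
Definition op_add (A B : opr H) : opr H :=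
  fun x => [set z | exists a, exists b, A x a /\ B x b /\ z = a + b].
Definition op_scale (c : R) (A : opr H) : opr H :=
  fun x => [set z | exists u, A x u /\ z = c *: u].
Fixpoint op_sum (A : nat -> opr H) (n : nat) : opr H :=
  match n with
  | 0 => fun _ => [set 0]
  | n.+1 => op_add (op_sum A n) (A n)
  end.
Definition resolvent (T : opr H) : opr H :=
  fun x => [set y | op_add op_id T y x].
Definition strengthen (beta : R) (A : opr H) : opr H :=
  fun x => op_add A (op_scale (1 - beta) op_id) (beta^-1 *: x).
Definition zer (T : opr H) : set H := [set x | T x 0].
Definition ran (T : opr H) : set H := [set y | exists x, T x y].
End Ops.
Arguments op_id {R H}.

From HB Require Import structures.
From mathcomp Require Import all_boot all_order all_algebra.
From mathcomp Require Import all_classical all_reals all_analysis.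
Import Order.TTheory GRing.Theory Num.Theory.
Import numFieldNormedType.Exports.
Local Open Scope classical_set_scope.
Local Open Scope ring_scope.

(* Writing T := \sum_i A_i, the strengthened sum is x |-> T(x/beta) + r(1-beta) x/beta,
   so 0 is a value at x exactly when y := x/beta satisfies
   0 \in y + (r(1-beta))^-1 T y, i.e. when y \in J_{(r(1-beta))^-1 T}(0). *)

Section SetValuedOperators.
Variables (R : realType) (H : lmodType R).
Implicit Types (A : nat -> opr H) (T : opr H).

Lemma op_sum_comp A (f : H -> H) n x :
  op_sum (fun i y => A i (f y)) n x = op_sum A n (f x).
Proof. by elim: n => //= n IH; rewrite /op_add IH. Qed.

Lemma op_sum_add_scale_id A (a : R) n x z :
  op_sum (fun i => op_add (A i) (op_scale a op_id)) n x z <->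
  exists2 w, op_sum A n x w & z = w + (n%:R * a) *: x.
Proof.
elim: n z => [|n IH] z /=.
  by split=> [->|[w -> ->]]; [exists 0|]; rewrite ?mul0r ?scale0r ?addr0.
have shift_n1 : n.+1%:R * a = n%:R * a + a by rewrite -addn1 natrD mulrDl mul1r.
rewrite shift_n1 scalerDl; split.
  move=> [_ [_ [/IH [w Aw ->] [[u [_ [Au [[_ [-> ->]] ->]]]] ->]]]].
  by exists (w + u); [exists w, u | rewrite addrACA].
move=> [_ [w [u [Aw [Au ->]]]] ->].
exists (w + (n%:R * a) *: x), (u + a *: x); split; first by apply/IH; exists w.
split; last by rewrite addrACA.
by exists u, (a *: x); do 2!split=> //; exists x.
Qed.

Lemma op_sum_strengthen A (beta : R) n x z :
  op_sum (fun i => strengthen beta (A i)) n x z <->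
  exists2 w, op_sum A n (beta^-1 *: x) w
           & z = w + (n%:R * (1 - beta)) *: (beta^-1 *: x).
Proof.
rewrite /strengthen (op_sum_comp (fun i => op_add (A i) _) ( *:%R beta^-1)).
exact: op_sum_add_scale_id.
Qed.

Lemma resolvent_scale0 (c : R) T y : c != 0 ->
  resolvent (op_scale c T) 0 y <-> T y (- c^-1 *: y).
Proof.
move=> c_neq0; split.
  move=> [_ [_ [-> [[u [Tu ->]] /esym/eqP]]]]; rewrite addr_eq0 => /eqP y_eq.
  by rewrite {2}y_eq scaleNr scalerN opprK scalerA mulVf // scale1r.
move=> Ty; exists y, (c *: (- c^-1 *: y)); split=> //; split; first by exists (- c^-1 *: y).
by rewrite scalerA mulrN mulfV // scaleN1r subrr.
Qed.

Lemma image_scalerE (beta : R) (P : set H) :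
  beta != 0 -> [set beta *: y | y in P] = [set x | P (beta^-1 *: x)].
Proof.
move=> beta_neq0; apply/seteqP; split=> x /=.
  by move=> [y Py <-]; rewrite scalerA mulVf // scale1r.
by move=> Px; exists (beta^-1 *: x) => //; rewrite scalerA mulfV // scale1r.
Qed.

Lemma zer_op_sum_strengthen A (beta : R) n :
  beta != 0 -> n%:R * (1 - beta) != 0 ->
  zer (op_sum (fun i => strengthen beta (A i)) n)
    = [set beta *: y | y in resolvent (op_scale (n%:R * (1 - beta))^-1 (op_sum A n)) 0].
Proof.
move=> beta_neq0 k_neq0; rewrite image_scalerE //; apply/seteqP; split=> x;
  rewrite /zer /= resolvent_scale0 ?invr_neq0 // invrK op_sum_strengthen.
  by move=> [w Tw /eqP]; rewrite eq_sym addr_eq0 scaleNr => /eqP <-.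
by move=> Tx; exists (- (n%:R * (1 - beta)) *: (beta^-1 *: x)); rewrite // scaleNr addNr.
Qed.

End SetValuedOperators.

Theorem proposition4p5 (R : realType) (H : completeNormedModType R)
  (ip : inner_product H) (r : nat) (A : nat -> opr H) (beta : R) :
  (0 < r)%N -> 0 < beta < 1 ->
  let c := (r%:R * (1 - beta))^-1 in
  zer (op_sum (fun i => strengthen beta (A i)) r)
    = [set beta *: y | y in resolvent (op_scale c (op_sum A r)) 0]
  /\ (zer (op_sum (fun i => strengthen beta (A i)) r) <> set0
      <-> ran (op_add op_id (op_scale c (op_sum A r))) 0).
Proof.
move=> r_gt0 /andP[beta_gt0 beta_lt1] c.
have beta_neq0 : beta != 0 by rewrite lt0r_neq0.
have k_neq0 : r%:R * (1 - beta) != 0 :> R.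
  by rewrite mulf_neq0 ?pnatr_eq0 -?lt0n // subr_eq0 eq_sym lt_eqF.
rewrite zer_op_sum_strengthen //; split=> //.
(* [0 \in ran (Id + c T)] unfolds to [J_{c T}(0) !=set0]. *)
split.
  by move/eqP/set0P/nonempty_image.
by move/(image_nonempty ( *:%R beta))/set0P/eqP.
Qed.
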